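(* Let $1\to A\to E\xrightarrow{\pi} G\to 1$ be an extension of groups. Let $SQ$ denote either the construction $H\mapsto(\operatorname{Conj}_n(H),\mathrm{inv})$ for a fixed $n\ge 1$, or the construction $H\mapsto(\operatorname{Core}(H),\mathrm{id})$ (the same construction for all groups involved). Then there exists a dynamical cocycle $(\alpha,\beta)$ of the symmetric quandle $SQ(G)$ over the family of sets $S=\{S_x\}_{x\in G}$ with $S_x=A$ (the underlying set of $A$, i.e. of $SQ(A)$) for every $x$, such that $SQ(E)$ is isomorphic as a symmetric quandle to $SQ(G)\times_{(\alpha,\beta)}SQ(A)$.
   Context: For a group $H$ and $n\ge1$, the $n$-conjugation quandle $\operatorname{Conj}_n(H)$ is the set $H$ with $x*y=y^{-n}xy^{n}$, and $\mathrm{inv}(x)=x^{-1}$ is a good involution on it. The core quandle $\operatorname{Core}(H)$ is the set $H$ with $x*y=yx^{-1}y$, and $\mathrm{id}$ is a good involution on it. Here a quandle is a set with binary operation $*$ such that each $x\mapsto x*y$ is bijective (inverse $x\mapsto x*^{-1}y$), $(x*y)*z=(x*z)*(y*z)$ and $x*x=x$; a good involution is $\rho$ with $\rho^2=\mathrm{id}$, $\rho(x*y)=\rho(x)*y$, $x*\rho(y)=x*^{-1}y$, and $(X,\rho)$ is then a symmetric quandle; symmetric quandle homomorphisms preserve $*$ and commute with the involutions. A dynamical cocycle of a symmetric quandle $(X,\rho)$ over a family of sets $S=\{S_x\}$ consists of maps $\alpha_{x,y}:S_x\times S_y\to S_{x*y}$, $\beta_x:S_x\to S_{\rho(x)}$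 such that for all $x,y,z$, $s\in S_x,t\in S_y,w\in S_z$ (with $\alpha_{x,y}(t)(s):=\alpha_{x,y}(s,t)$): (1) $\alpha_{x,y}(t)$ is bijective $S_x\to S_{x*y}$; (2) $\alpha_{x*y,z}(\alpha_{x,y}(s,t),w)=\alpha_{x*z,y*z}(\alpha_{x,z}(s,w),\alpha_{y,z}(t,w))$; (3) $\alpha_{\rho(x),y}(\beta_x(s),t)=\beta_{x*y}(\alpha_{x,y}(s,t))$; (4) $\beta_{\rho(x)}\beta_x(s)=s$; (5) $\alpha_{x,\rho(y)}(\beta_y(t))(s)=(\alpha_{x*^{-1}y,y}(t))^{-1}(s)$; (6) $\alpha_{x,x}(s,s)=s$. The extension $X\times_{(\alpha,\beta)}S$ is the set $\{(x,s)\mid x\in X,s\in S_x\}$ with $(x,s)*(y,t)=(x*y,\alpha_{x,y}(s,t))$ and involution $(x,s)\mapsto(\rho(x),\beta_x(s))$; it is a symmetric quandle. *)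

Set Implicit Arguments.

Record group := Group {
  carrier :> Type;
  gmul : carrier -> carrier -> carrier;
  gone : carrier;
  ginv : carrier -> carrier;
  gmulA : forall x y z, gmul x (gmul y z) = gmul (gmul x y) z;
  gmul1x : forall x, gmul gone x = x;
  gmulx1 : forall x, gmul x gone = x;
  gmulVx : forall x, gmul (ginv x) x = gone;
  gmulxV : forall x, gmul x (ginv x) = gone
}.

Arguments gmul {g} _ _.
Arguments gone {g}.
Arguments ginv {g} _.

Fixpoint gpow {H : group} (y : H) (n : nat) : H :=
  match n with O => gone | S m => gmul (gpow y m) y end.

Definition is_hom {H K : group} (f : H -> K) : Prop :=
  forall x y, f (gmul x y) = gmul (f x) (f y).

Definition group_extension {A E G : group} (i : A -> E) (pi : E -> G) : Prop :=
  is_hom i /\ is_hom pi /\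
  (forall a b, i a = i b -> a = b) /\
  (forall g, exists e, pi e = g) /\
  (forall e, pi e = gone <-> exists a, i a = e).

(** [SQConj n] is H |-> (Conj_n(H), inv);  [SQCore] is H |-> (Core(H), id). *)
Inductive sqkind := SQConj (n : nat) | SQCore.

Definition sq_valid (k : sqkind) : Prop :=
  match k with SQConj n => 1 <= n | SQCore => True end.

Definition sq_op (k : sqkind) {H : group} (x y : H) : H :=
  match k with
  | SQConj n => gmul (gmul (ginv (gpow y n)) x) (gpow y n)
  | SQCore => gmul (gmul y (ginv x)) y
  end.

Definition sq_invop (k : sqkind) {H : group} (x y : H) : H :=
  match k with
  | SQConj n => gmul (gmul (gpow y n) x) (ginv (gpow y n))
  | SQCore => gmul (gmul y (ginv x)) y
  end.

Definition sq_rho (k : sqkind) {H : group} (x : H) : H :=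
  match k with
  | SQConj _ => ginv x
  | SQCore => x
  end.

(** alpha x y s t = alpha_{x,y}(s,t),  beta x s = beta_x(s). *)
Definition dyn_cocycle (k : sqkind) {G : group} {S : Type}
    (alpha : G -> G -> S -> S -> S) (beta : G -> S -> S) : Prop :=
  let op := sq_op k (H:=G) in
  let iop := sq_invop k (H:=G) in
  let rho := sq_rho k (H:=G) in
  (forall x y t, (forall s1 s2, alpha x y s1 t = alpha x y s2 t -> s1 = s2) /\
                 (forall s', exists s, alpha x y s t = s')) /\
  (forall x y z s t w,
      alpha (op x y) z (alpha x y s t) w =
      alpha (op x z) (op y z) (alpha x z s w) (alpha y z t w)) /\
  (forall x y s t, alpha (rho x) y (beta x s) t = beta (op x y) (alpha x y s t)) /\
  (forall x s, beta (rho x) (beta x s) = s) /\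
  (* (5) alpha_{x,rho y}(beta_y t)(s) = (alpha_{x *^-1 y, y}(t))^-1 (s),
         written out: alpha_{x *^-1 y, y}(t) maps the left side to s *)
  (forall x y s t, alpha (iop x y) y (alpha x (rho y) s (beta y t)) t = s) /\
  (forall x s, alpha x x s s = s).

Definition ext_op (k : sqkind) {G : group} {S : Type}
    (alpha : G -> G -> S -> S -> S) (p q : G * S) : G * S :=
  (sq_op k (fst p) (fst q), alpha (fst p) (fst q) (snd p) (snd q)).

Definition ext_rho (k : sqkind) {G : group} {S : Type}
    (beta : G -> S -> S) (p : G * S) : G * S :=
  (sq_rho k (fst p), beta (fst p) (snd p)).

Definition sym_quandle_iso {X Y : Type} (opX : X -> X -> X) (rhoX : X -> X)
    (opY : Y -> Y -> Y) (rhoY : Y -> Y) : Prop :=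
  exists (f : X -> Y) (g : Y -> X),
    (forall x, g (f x) = x) /\ (forall y, f (g y) = y) /\
    (forall x1 x2, f (opX x1 x2) = opY (f x1) (f x2)) /\
    (forall x, f (rhoX x) = rhoY (f x)).

(** Choosing a set-theoretic section [s] of [pi] identifies [E] with [G * A]
    through [e |-> (pi e, i^-1 (s (pi e)^-1 e))], compatibly with [pi].
    Transporting the operation and involution of [SQ(E)] along this bijection
    yields operations on [G * A] whose first components are those of [SQ(G)],
    because [pi] is a homomorphism of symmetric quandles.  Their second
    components define [alpha] and [beta]; the cocycle conditions are just the
    symmetric quandle axioms of [SQ(E)] read in the second coordinate. *)

From Stdlib Require Import ClassicalEpsilon.

Set Implicit Arguments.
Unset Strict Implicit.

Section GroupLemmas.
Variable H : group.
Implicit Types x y : H.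

Lemma gmulK x y : gmul (gmul x y) (ginv y) = x.
Proof. rewrite <- gmulA, gmulxV, gmulx1. reflexivity. Qed.

Lemma gmulVK x y : gmul (gmul x (ginv y)) y = x.
Proof. rewrite <- gmulA, gmulVx, gmulx1. reflexivity. Qed.

Lemma ginv_unique x y : gmul x y = gone -> ginv x = y.
Proof.
intro hxy. rewrite <- (gmulx1 _ (ginv x)), <- hxy, gmulA, gmulVx, gmul1x.
reflexivity.
Qed.

Lemma ginvM x y : ginv (gmul x y) = gmul (ginv y) (ginv x).
Proof. apply ginv_unique. rewrite gmulA, gmulK, gmulxV. reflexivity. Qed.

Lemma ginvK x : ginv (ginv x) = x.
Proof. apply ginv_unique, gmulVx. Qed.

Lemma ginv1 : ginv (@gone H) = gone.
Proof. apply ginv_unique, gmulx1. Qed.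

End GroupLemmas.

Ltac group_simpl :=
  repeat progress rewrite ?ginvM, ?ginvK, ?ginv1, ?gmulA, ?gmulK, ?gmulVK,
    ?gmulxV, ?gmulVx, ?gmul1x, ?gmulx1.

Lemma gpow_commute (H : group) (y : H) n : gmul (gpow y n) y = gmul y (gpow y n).
Proof.
induction n as [|n IHn]; cbn [gpow].
- rewrite gmul1x, gmulx1. reflexivity.
- rewrite IHn at 1. rewrite gmulA. reflexivity.
Qed.

Lemma gpowV (H : group) (y : H) n : gpow (ginv y) n = ginv (gpow y n).
Proof.
induction n as [|n IHn]; cbn [gpow].
- rewrite ginv1. reflexivity.
- rewrite IHn, gpow_commute, ginvM. reflexivity.
Qed.

Lemma gpowJ (H : group) (u y : H) n :
  gpow (gmul (gmul (ginv u) y) u) n = gmul (gmul (ginv u) (gpow y n)) u.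
Proof.
induction n as [|n IHn]; cbn [gpow]; [|rewrite IHn]; group_simpl; reflexivity.
Qed.

Section SymmetricQuandleAxioms.
Variables (k : sqkind) (H : group).
Implicit Types x y z : H.

Lemma sq_invopK x y : sq_op k (sq_invop k x y) y = x.
Proof. destruct k; simpl; group_simpl; reflexivity. Qed.

Lemma sq_opK x y : sq_invop k (sq_op k x y) y = x.
Proof. destruct k; simpl; group_simpl; reflexivity. Qed.

Lemma sq_op_distr x y z :
  sq_op k (sq_op k x y) z = sq_op k (sq_op k x z) (sq_op k y z).
Proof. destruct k; simpl; rewrite ?gpowJ; group_simpl; reflexivity. Qed.

Lemma sq_rho_op x y : sq_op k (sq_rho k x) y = sq_rho k (sq_op k x y).
Proof. destruct k; simpl; group_simpl; reflexivity. Qed.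

Lemma sq_rhoK x : sq_rho k (sq_rho k x) = x.
Proof. destruct k; simpl; group_simpl; reflexivity. Qed.

Lemma sq_invop_rho x y : sq_invop k x y = sq_op k x (sq_rho k y).
Proof. destruct k; simpl; rewrite ?gpowV; group_simpl; reflexivity. Qed.

Lemma sq_op_idem x : sq_op k x x = x.
Proof.
destruct k; simpl; [rewrite <- gmulA, <- gpow_commute|]; group_simpl; reflexivity.
Qed.

End SymmetricQuandleAxioms.

Section Homomorphisms.
Variables (E G : group) (pi : E -> G).
Hypothesis pi_hom : is_hom pi.

Lemma hom_one : pi gone = gone.
Proof.
pose proof (pi_hom gone gone) as h. rewrite gmul1x in h.
rewrite <- (gmulK (pi gone) (pi gone)), <- h at 1. group_simpl. reflexivity.
Qed.

Lemma hom_inv x : pi (ginv x) = ginv (pi x).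
Proof. symmetry. apply ginv_unique. rewrite <- pi_hom, gmulxV. apply hom_one. Qed.

Lemma hom_pow x n : pi (gpow x n) = gpow (pi x) n.
Proof.
induction n as [|n IHn]; cbn [gpow]; [apply hom_one|].
rewrite pi_hom, IHn. reflexivity.
Qed.

Lemma hom_sq_op k x y : pi (sq_op k x y) = sq_op k (pi x) (pi y).
Proof. destruct k; simpl; rewrite ?pi_hom, ?hom_inv, ?hom_pow; reflexivity. Qed.

Lemma hom_sq_rho k x : pi (sq_rho k x) = sq_rho k (pi x).
Proof. destruct k; simpl; rewrite ?hom_inv; reflexivity. Qed.

Lemma hom_sq_invop k x y : pi (sq_invop k x y) = sq_invop k (pi x) (pi y).
Proof. rewrite !sq_invop_rho, hom_sq_op, hom_sq_rho. reflexivity. Qed.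

End Homomorphisms.

Section Transport.
Variables (k : sqkind) (A E G : group) (pi : E -> G).
Variables (Phi : E -> G * A) (Psi : G * A -> E).
Hypotheses (PsiK : forall e, Psi (Phi e) = e) (PhiK : forall p, Phi (Psi p) = p).
Hypotheses (fst_Phi : forall e, fst (Phi e) = pi e) (pi_hom : is_hom pi).

Definition transport_alpha (x y : G) (s t : A) : A :=
  snd (Phi (sq_op k (Psi (x, s)) (Psi (y, t)))).

Definition transport_beta (x : G) (s : A) : A :=
  snd (Phi (sq_rho k (Psi (x, s)))).

Lemma pi_Psi x s : pi (Psi (x, s)) = x.
Proof. rewrite <- fst_Phi, PhiK. reflexivity. Qed.

Lemma Phi_pi e : Phi e = (pi e, snd (Phi e)).
Proof. rewrite <- fst_Phi. apply surjective_pairing. Qed.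

Lemma Psi_snd_Phi e x : pi e = x -> Psi (x, snd (Phi e)) = e.
Proof. intros <-. rewrite <- Phi_pi. apply PsiK. Qed.

Lemma Psi_inj_snd {x y : G} {s t : A} : Psi (x, s) = Psi (y, t) -> s = t.
Proof. intro h. apply (f_equal (fun e => snd (Phi e))) in h. rewrite !PhiK in h. exact h. Qed.

Lemma Psi_op x y s t :
  Psi (sq_op k x y, transport_alpha x y s t) = sq_op k (Psi (x, s)) (Psi (y, t)).
Proof. apply Psi_snd_Phi. rewrite hom_sq_op, !pi_Psi by exact pi_hom. reflexivity. Qed.

Lemma Psi_rho x s : Psi (sq_rho k x, transport_beta x s) = sq_rho k (Psi (x, s)).
Proof. apply Psi_snd_Phi. rewrite hom_sq_rho, pi_Psi by exact pi_hom. reflexivity. Qed.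

Lemma transport_alpha_bij x y t :
  (forall s1 s2, transport_alpha x y s1 t = transport_alpha x y s2 t -> s1 = s2) /\
  (forall s', exists s, transport_alpha x y s t = s').
Proof.
split.
- intros s1 s2 h.
  assert (hPsi : Psi (sq_op k x y, transport_alpha x y s1 t)
               = Psi (sq_op k x y, transport_alpha x y s2 t)) by (rewrite h; reflexivity).
  rewrite !Psi_op in hPsi.
  apply (f_equal (fun e => sq_invop k e (Psi (y, t)))) in hPsi.
  rewrite !sq_opK in hPsi. exact (Psi_inj_snd hPsi).
- intro s'. set (e := sq_invop k (Psi (sq_op k x y, s')) (Psi (y, t))).
  exists (snd (Phi e)).
  assert (he : Psi (x, snd (Phi e)) = e).
  { apply Psi_snd_Phi. unfold e. rewrite hom_sq_invop, !pi_Psi, sq_opK by exact pi_hom.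
    reflexivity. }
  apply (Psi_inj_snd (x := sq_op k x y) (y := sq_op k x y)).
  rewrite Psi_op, he. unfold e. rewrite sq_invopK. reflexivity.
Qed.

Lemma transport_dyn_cocycle : dyn_cocycle k transport_alpha transport_beta.
Proof.
split; [intros; apply transport_alpha_bij|].
repeat split; intros.
- eapply Psi_inj_snd. rewrite !Psi_op. apply sq_op_distr.
- eapply Psi_inj_snd. rewrite Psi_op, !Psi_rho, Psi_op. apply sq_rho_op.
- eapply Psi_inj_snd. rewrite !Psi_rho, sq_rhoK. reflexivity.
- eapply (Psi_inj_snd (y := x)).
  rewrite Psi_op, (sq_invop_rho k x y), Psi_op, Psi_rho, <- sq_invop_rho, sq_invopK.
  reflexivity.
- eapply (Psi_inj_snd (y := x)). rewrite Psi_op. apply sq_op_idem.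
Qed.

Lemma transport_sym_quandle_iso :
  sym_quandle_iso (sq_op k (H:=E)) (sq_rho k (H:=E))
                  (ext_op k transport_alpha) (ext_rho k transport_beta).
Proof.
exists Phi, Psi. repeat split; [exact PsiK|exact PhiK| |]; intros.
- rewrite <- (PhiK (ext_op _ _ _ _)). f_equal.
  unfold ext_op. rewrite Psi_op, <- !surjective_pairing, !PsiK. reflexivity.
- rewrite <- (PhiK (ext_rho _ _ _)). f_equal.
  unfold ext_rho. rewrite Psi_rho, <- surjective_pairing, PsiK. reflexivity.
Qed.

End Transport.

Lemma extension_trivial_as_set (A E G : group) (i : A -> E) (pi : E -> G) :
  group_extension i pi ->
  exists (Phi : E -> G * A) (Psi : G * A -> E),
    (forall e, Psi (Phi e) = e) /\ (forall p, Phi (Psi p) = p) /\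
    (forall e, fst (Phi e) = pi e).
Proof.
intros [_ [pi_hom [i_inj [pi_surj ker_pi]]]].
destruct (choice _ pi_surj) as [sec pi_sec].
assert (h : forall e, exists a, i a = gmul (ginv (sec (pi e))) e).
{ intro e. apply ker_pi. rewrite pi_hom, (hom_inv pi_hom), pi_sec. apply gmulVx. }
destruct (choice _ h) as [coord i_coord].
exists (fun e => (pi e, coord e)), (fun p => gmul (sec (fst p)) (i (snd p))).
repeat split.
- intro e. simpl. rewrite i_coord. group_simpl. reflexivity.
- intros [g a]. simpl.
  assert (pi_i : pi (i a) = gone) by (apply ker_pi; eauto).
  assert (pi_g : pi (gmul (sec g) (i a)) = g) by (rewrite pi_hom, pi_sec, pi_i; apply gmulx1).
  rewrite pi_g. f_equal. apply i_inj. rewrite i_coord, pi_g. group_simpl. reflexivity.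
Qed.

Theorem corollary5p2 (k : sqkind) (A E G : group) (i : A -> E) (pi : E -> G) :
  sq_valid k ->
  group_extension i pi ->
  exists (alpha : G -> G -> A -> A -> A) (beta : G -> A -> A),
    dyn_cocycle k alpha beta /\
    sym_quandle_iso (sq_op k (H:=E)) (sq_rho k (H:=E))
                    (ext_op k alpha) (ext_rho k beta).
Proof.
intros _ ext.
destruct (extension_trivial_as_set ext) as (Phi & Psi & PsiK & PhiK & fst_Phi).
assert (pi_hom : is_hom pi) by apply ext.
exists (transport_alpha k Phi Psi), (transport_beta k Phi Psi). split.
- exact (transport_dyn_cocycle k PsiK PhiK fst_Phi pi_hom).
- exact (transport_sym_quandle_iso k PsiK PhiK fst_Phi pi_hom).
Qed.
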